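(* Let $n\ge1$, $k=\lfloor n/2\rfloor$, let $(p_j,u_j)$, $0\le j\le n$, be the coordinates of the trajectory $T_n$, and put $\lambda_j=1-u_j$. Then, with $\delta=1-(p_k-1)^2$, $$C_n=2\sum_{j=0}^{k-1}\bigl(3-p_j+u_j-2u_{j+1}-p_ju_j\bigr)+\delta=2\sum_{j=1}^{k}\frac{\lambda_j(\lambda_{j-1}-2\lambda_j)}{u_j}+\delta.$$
   Context: For $n\ge1$ and $\mathbf{x}=(x_1,\dots,x_n)\in(0,\infty)^n$ let $f_n(\mathbf{x})=\sum_{i=1}^n x_i+\sum_{1\le i\le j\le n}\prod_{k=i}^j \frac1{x_k}$, $A_n=\inf_{\mathbf{x}\in(0,\infty)^n} f_n(\mathbf{x})$, and $C_n=3n-A_n$. Let $\Phi$ be the partial map of $\mathbb{R}^2$ defined for $p\ne0$ by $\Phi(p,u)=\bigl(p^2(u+1)-1,\ 1/p\bigr)$. For $n\ge1$, the trajectory $T_n$ is the (existing and unique) finite sequence $(p_j,u_j)$, $j=0,\dots,n$, with $(p_j,u_j)=\Phi(p_{j-1},u_{j-1})$ for $1\le j\le n$, $u_0=0$, $p_n=0$, and $p_j>0$ for $0\le j\le n-1$. *)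

From HB Require Import structures.
From mathcomp Require Import all_boot all_order all_algebra.
From mathcomp Require Import boolp classical_sets reals.
Set Implicit Arguments. Unset Strict Implicit. Unset Printing Implicit Defensive.
Import Order.TTheory GRing.Theory Num.Theory.
Local Open Scope ring_scope.
Local Open Scope classical_set_scope.

Definition fn (R : realType) (n : nat) (x : 'I_n -> R) : R :=
  \sum_(i < n) x i +
  \sum_(i < n) \sum_(j < n | (i <= j)%N)
     \prod_(k < n | (i <= k <= j)%N) (x k)^-1.

Definition An (R : realType) (n : nat) : R :=
  inf [set fn x | x in [set x : 'I_n -> R | forall i, 0 < x i]].

Definition Cn (R : realType) (n : nat) : R := 3 * n%:R - An R n.

Definition Phi (R : realType) (z : R * R) : R * R :=
  (z.1 ^+ 2 * (z.2 + 1) - 1, 1 / z.1).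

Definition is_trajectory (R : realType) (n : nat) (T : nat -> R * R) : Prop :=
  [/\ (T 0%N).2 = 0,
      (forall j, (1 <= j <= n)%N -> (T j.-1).1 != 0 /\ T j = Phi (T j.-1)),
      (T n).1 = 0
    & (forall j, (j < n)%N -> 0 < (T j).1)].

From HB Require Import structures.
From mathcomp Require Import all_boot all_order all_algebra.
From mathcomp Require Import boolp classical_sets reals sequences exp.
From mathcomp Require Import ring lra zify.
Import Order.TTheory GRing.Theory Num.Theory.
Local Open Scope ring_scope.

(* With y = 1/x, the candidate minimizer x_k = p_k (1 + u_k) of f_n read off the
   trajectory has tail sums sum_(j >= i) prod_(l = i..j) y_l equal to p_i and head
   sums sum_(i <= l) prod_(m = i..l) y_m equal to u_(l+1).  Writing an arbitrary
   point as x_k e^(t_k) and using e^(-s) >= 1 - s, these identities give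
   f_n(x e^t) >= f_n(x) + sum_k x_k (e^(t_k) - 1 - t_k), so x is the unique
   minimizer and A_n = sum_k x_k + sum_k p_k.  Uniqueness also shows that the
   reversed sequence (u_(n-j), p_(n-j)), itself a trajectory, is T_n, i.e.
   u_j = p_(n-j).  Folding the sum for C_n at n/2 with this symmetry and
   telescoping sum_(k < m) (2 u_k - 3 u_(k+1) + p_k) = p_m u_m - 2 u_m give the
   formula; the second form is a termwise identity since u_(j+1) = 1/p_j. *)

Set Implicit Arguments.
Unset Strict Implicit.
Unset Printing Implicit Defensive.

Lemma exchange_big_nat_triangle (R : nmodType) m n (F : nat -> nat -> R) :
  \sum_(m <= i < n) \sum_(i <= j < n) F i j = \sum_(m <= j < n) \sum_(m <= i < j.+1) F i j.
Proof.
under eq_big_nat => i /andP[le_mi _] do rewrite (big_nat_widenl _ _ _ _ _ le_mi).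
rewrite (exchange_big_dep_nat predT) //; apply: eq_big_nat => j /andP[_ lt_jn].
by rewrite (big_nat_widen _ _ _ _ _ lt_jn); apply: eq_bigl => i; rewrite ltnS.
Qed.

Lemma sum_weighted_interval_sums (R : comPzRingType) n (w : nat -> nat -> R) (t : nat -> R) :
  \sum_(0 <= i < n) \sum_(i <= j < n) w i j * \sum_(i <= l < j.+1) t l
  = \sum_(0 <= l < n) t l * \sum_(0 <= i < l.+1) \sum_(l <= j < n) w i j.
Proof.
transitivity (\sum_(0 <= i < n) \sum_(i <= l < n) \sum_(l <= j < n) t l * w i j).
  apply: eq_big_nat => i _; rewrite exchange_big_nat_triangle.
  by apply: eq_big_nat => j _; rewrite mulr_sumr; apply: eq_bigr => l _; rewrite mulrC.
rewrite exchange_big_nat_triangle; apply: eq_big_nat => l _.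
by rewrite mulr_sumr; apply: eq_bigr => i _; rewrite mulr_sumr.
Qed.

Lemma big_nat_rev_tail (R : nmodType) n K (F : nat -> R) : (K <= n)%N ->
  \sum_(n - K <= k < n) F k = \sum_(0 <= k < K) F (n - k.+1)%N.
Proof.
elim: K => [|K IH] le_Kn; first by rewrite subn0 !big_geq.
rewrite big_nat_recr //= -IH; last exact: ltnW.
rewrite big_ltn; last by lia.
by rewrite addrC (_ : (n - K.+1).+1 = n - K)%N; last lia.
Qed.

Lemma inf_eq_lbound (R : realType) (E : set R) m : E m -> lbound E m -> inf E = m.
Proof.
move=> Em lbm; apply/eqP; rewrite eq_le lb_le_inf ?andbT //; last by exists m.
by apply: ge_inf => //; exists m.
Qed.

Definition fseq (R : fieldType) n (x : nat -> R) :=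
  \sum_(0 <= k < n) x k + \sum_(0 <= i < n) \sum_(i <= j < n) \prod_(i <= l < j.+1) (x l)^-1.

Lemma fseq_ext (R : fieldType) n (x x' : nat -> R) :
  (forall k, (k < n)%N -> x k = x' k) -> fseq n x = fseq n x'.
Proof.
move=> eqx; rewrite /fseq; congr (_ + _).
  by apply: eq_big_nat => k /andP[_ /eqx].
apply: eq_big_nat => i _; apply: eq_big_nat => j /andP[_ lt_jn].
by apply: eq_big_nat => l /andP[_ lt_lj]; rewrite eqx //; lia.
Qed.

Lemma fn_fseq (R : realType) n (x : 'I_n -> R) (X : nat -> R) :
  (forall i : 'I_n, X i = x i) -> fn x = fseq n X.
Proof.
move=> eqX; rewrite /fn /fseq big_mkord; congr (_ + _).
  by apply: eq_bigr => i _; rewrite eqX.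
rewrite big_mkord; apply: eq_bigr => i _.
rewrite (big_geq_mkord _ _ xpredT); apply: eq_bigr => j /= le_ij.
rewrite (big_nat_widen _ _ _ _ _ (ltn_ord j)) (big_geq_mkord _ _ (fun l => l < j.+1)%N).
by apply: eq_big => [l | l _]; rewrite ?eqX // ltnS andbC.
Qed.

Record trajectory (R : realFieldType) (n : nat) (p u : nat -> R) : Prop := Trajectory {
  traj_u0 : u 0%N = 0;
  traj_uS : forall j, (j < n)%N -> u j.+1 = (p j)^-1;
  traj_pS : forall j, (j < n)%N -> p j.+1 = p j ^+ 2 * (u j + 1) - 1;
  traj_pn : p n = 0;
  traj_p_gt0 : forall j, (j < n)%N -> 0 < p j }.

Lemma is_trajectory_coords (R : realType) n (T : nat -> R * R) :
  is_trajectory n T -> trajectory n (fun j => (T j).1) (fun j => (T j).2).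
Proof.
case=> T0 TS Tn Tpos; split=> // j lt_jn; have [_ ->] := TS j.+1 lt_jn.
  by rewrite /= div1r.
by [].
Qed.

Definition traj_argmin (R : pzRingType) (p u : nat -> R) k := p k * (1 + u k).

Section Trajectory.
Variables (R : realFieldType) (n : nat) (p u : nat -> R).
Hypothesis tr : trajectory n p u.
Local Notation x := (traj_argmin p u).

Lemma traj_u_ge0 j : (j <= n)%N -> 0 <= u j.
Proof.
case: j => [|j] le_jn; first by rewrite (traj_u0 tr).
by rewrite (traj_uS tr le_jn) invr_ge0 ltW // (traj_p_gt0 tr).
Qed.

Lemma traj_argmin_gt0 k : (k < n)%N -> 0 < x k.
Proof.
move=> lt_kn; rewrite mulr_gt0 ?(traj_p_gt0 tr) //.
by have := traj_u_ge0 (ltnW lt_kn); lra.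
Qed.

Lemma traj_uS_argmin j : (j < n)%N -> u j.+1 = (x j)^-1 * (1 + u j).
Proof.
move=> lt_jn; have := traj_p_gt0 tr lt_jn; have := traj_u_ge0 (ltnW lt_jn).
by rewrite (traj_uS tr lt_jn) /traj_argmin => ? ?; field; lra.
Qed.

Lemma traj_p_argmin j : (j < n)%N -> p j = (x j)^-1 * (1 + p j.+1).
Proof.
move=> lt_jn; have := traj_p_gt0 tr lt_jn; have := traj_u_ge0 (ltnW lt_jn).
by rewrite (traj_pS tr lt_jn) /traj_argmin => ? ?; field; lra.
Qed.

Lemma traj_argmin_succ j : (j < n)%N -> u j.+1 * (1 + p j.+1) = x j.
Proof.
move=> lt_jn; have := traj_p_gt0 tr lt_jn.
rewrite (traj_uS tr lt_jn) (traj_pS tr lt_jn) /traj_argmin => ?; field; lra.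
Qed.

Lemma traj_tail_sum i : (i <= n)%N ->
  \sum_(i <= j < n) \prod_(i <= l < j.+1) (x l)^-1 = p i.
Proof.
move=> le_in; have [d ->] : exists d, i = (n - d)%N by exists (n - i)%N; rewrite subKn.
elim: d => [|d IH]; first by rewrite subn0 big_geq // (traj_pn tr).
have [le_nd | lt_dn] := leqP n d; first by rewrite (_ : n - d.+1 = n - d)%N //; lia.
have lt_in : (n - d.+1 < n)%N by lia.
rewrite big_ltn // big_nat1 (traj_p_argmin lt_in) mulrDr mulr1; congr (_ + _).
under eq_big_nat => j /andP[lt_ij _] do rewrite big_ltn 1?ltnW //.
by rewrite -mulr_sumr (_ : (n - d.+1).+1 = n - d)%N ?IH //; lia.
Qed.

Lemma traj_head_sum l : (l < n)%N ->
  \sum_(0 <= i < l.+1) \prod_(i <= m < l.+1) (x m)^-1 = u l.+1.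
Proof.
elim: l => [|l IH] lt_ln.
  by rewrite !big_nat1 (traj_uS_argmin lt_ln) (traj_u0 tr) addr0 mulr1.
rewrite big_nat_recr //= big_nat1 (traj_uS_argmin lt_ln) -IH 1?ltnW //.
under eq_big_nat => i /andP[_ le_il] do rewrite big_nat_recr 1?ltnW //=.
by rewrite -big_distrl /= mulrDr mulr1 mulrC addrC.
Qed.

Lemma traj_cover_sum l : (l < n)%N ->
  \sum_(0 <= i < l.+1) \sum_(l <= j < n) \prod_(i <= m < j.+1) (x m)^-1 = x l.
Proof.
move=> lt_ln.
transitivity (\sum_(0 <= i < l.+1) \prod_(i <= m < l.+1) (x m)^-1 *
              \sum_(l <= j < n) \prod_(l.+1 <= m < j.+1) (x m)^-1).
  apply: eq_big_nat => i /andP[_ le_il]; rewrite mulr_sumr.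
  by apply: eq_big_nat => j /andP[le_lj _]; rewrite (@big_cat_nat _ _ _ l.+1) // ltnW.
rewrite -mulr_suml traj_head_sum // big_ltn // big_geq // traj_tail_sum //.
exact: traj_argmin_succ.
Qed.

Lemma fseq_traj_argmin : fseq n x = \sum_(0 <= k < n) x k + \sum_(0 <= i < n) p i.
Proof.
by congr (_ + _); apply: eq_big_nat => i /andP[_ /ltnW /traj_tail_sum].
Qed.

End Trajectory.

Section Minimum.
Variables (R : realType) (n : nat) (p u : nat -> R).
Hypothesis tr : trajectory n p u.
Local Notation x := (traj_argmin p u).

Lemma fseq_exp_ge (t : nat -> R) :
  fseq n x + \sum_(0 <= k < n) x k * (expR (t k) - 1 - t k)
  <= fseq n (fun k => x k * expR (t k)).
Proof.
pose w i j := \prod_(i <= l < j.+1) (x l)^-1.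
have prod_exp i j : (j < n)%N ->
    \prod_(i <= l < j.+1) (x l * expR (t l))^-1 = w i j * expR (- \sum_(i <= l < j.+1) t l).
  move=> lt_jn; rewrite -sumrN expR_sum -big_split /=.
  by apply: eq_big_nat => l _; rewrite invfM expRN.
have tangent : \sum_(0 <= i < n) \sum_(i <= j < n) w i j * (1 - \sum_(i <= l < j.+1) t l)
    <= \sum_(0 <= i < n) \sum_(i <= j < n) \prod_(i <= l < j.+1) (x l * expR (t l))^-1.
  apply: ler_sum_nat => i _; apply: ler_sum_nat => j /andP[_ lt_jn].
  rewrite prod_exp // ler_wpM2l ?expR_ge1Dx //.
  rewrite /w big_seq prodr_ge0 // => l; rewrite mem_index_iota => /andP[_ lt_lj].
  by rewrite invr_ge0 ltW // (traj_argmin_gt0 tr); lia.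
have linear_part : \sum_(0 <= i < n) \sum_(i <= j < n) w i j * (1 - \sum_(i <= l < j.+1) t l)
    = \sum_(0 <= i < n) \sum_(i <= j < n) w i j - \sum_(0 <= l < n) t l * x l.
  have -> : \sum_(0 <= l < n) t l * x l
      = \sum_(0 <= l < n) t l * \sum_(0 <= i < l.+1) \sum_(l <= j < n) w i j.
    by apply: eq_big_nat => l /andP[_ lt_ln]; rewrite traj_cover_sum.
  rewrite -sum_weighted_interval_sums -sumrB; apply: eq_bigr => i _.
  by rewrite -sumrB; apply: eq_bigr => j _; rewrite mulrBr mulr1.
have -> : \sum_(0 <= k < n) x k * (expR (t k) - 1 - t k) =
    \sum_(0 <= k < n) x k * expR (t k) - \sum_(0 <= k < n) x k - \sum_(0 <= l < n) t l * x l.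
  by rewrite -!sumrB; apply: eq_bigr => k _; ring.
by move: tangent; rewrite /fseq linear_part; lra.
Qed.

Lemma fseq_argmin_gap (X : nat -> R) : (forall k, (k < n)%N -> 0 < X k) ->
  exists2 t : nat -> R, forall k, (k < n)%N -> X k = x k * expR (t k)
  & fseq n x + \sum_(0 <= k < n) x k * (expR (t k) - 1 - t k) <= fseq n X.
Proof.
move=> X_gt0; pose t k := ln (X k / x k).
have eX k : (k < n)%N -> X k = x k * expR (t k).
  move=> lt_kn; have x_gt0 := traj_argmin_gt0 tr lt_kn.
  by rewrite lnK ?posrE ?divr_gt0 ?X_gt0 // mulrC divfK ?gt_eqF.
by exists t => //; rewrite (fseq_ext eX); apply: fseq_exp_ge.
Qed.

Lemma traj_gap_ge0 (t : nat -> R) k : (k < n)%N -> 0 <= x k * (expR (t k) - 1 - t k).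
Proof.
move=> lt_kn; rewrite mulr_ge0 ?(ltW (traj_argmin_gt0 tr lt_kn)) //.
by have := expR_ge1Dx (t k); lra.
Qed.

Lemma traj_argmin_min (X : nat -> R) : (forall k, (k < n)%N -> 0 < X k) ->
  fseq n x <= fseq n X.
Proof.
case/fseq_argmin_gap => t _; apply: le_trans; rewrite lerDl big_seq sumr_ge0 // => k.
by rewrite mem_index_iota => /andP[_ /traj_gap_ge0].
Qed.

Lemma traj_argmin_unique (X : nat -> R) : (forall k, (k < n)%N -> 0 < X k) ->
  fseq n X <= fseq n x -> forall k, (k < n)%N -> X k = x k.
Proof.
move=> /fseq_argmin_gap[t eX gap] le_Xx k lt_kn.
have gap_ge0 l : l \in index_iota 0 n -> 0 <= x l * (expR (t l) - 1 - t l).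
  by rewrite mem_index_iota => /andP[_ /traj_gap_ge0].
have : \sum_(0 <= l < n) x l * (expR (t l) - 1 - t l) == 0.
  by rewrite eq_le [X in 0 <= X]big_seq sumr_ge0 // andbT; lra.
rewrite big_seq psumr_eq0 // => /allP/(_ k); rewrite mem_index_iota lt_kn => /(_ isT).
rewrite mulf_eq0 gt_eqF ?(traj_argmin_gt0 tr) //= => /eqP gap_k.
have t_k0 : t k = 0.
  by apply: contraTeq isT => /expR_gt1Dx; lra.
by rewrite eX // t_k0 expR0 mulr1.
Qed.

End Minimum.

Section Symmetry.
Variables (R : realType) (n : nat) (p u : nat -> R).
Hypothesis tr : trajectory n p u.

Lemma traj_u_eq (p' u' : nat -> R) : trajectory n p' u' ->
  forall j, (j <= n)%N -> u' j = u j.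
Proof.
move=> tr' j; elim: j => [|j IH] le_jn; first by rewrite (traj_u0 tr) (traj_u0 tr').
have eq_x : traj_argmin p' u' j = traj_argmin p u j.
  apply: (traj_argmin_unique tr) le_jn; first exact: traj_argmin_gt0 tr'.
  exact/(traj_argmin_min tr')/traj_argmin_gt0.
by rewrite (traj_uS_argmin tr le_jn) (traj_uS_argmin tr' le_jn) eq_x IH 1?ltnW.
Qed.

Lemma trajectory_rev : trajectory n (fun j => u (n - j)%N) (fun j => p (n - j)%N).
Proof.
have pred_n j : (j < n)%N -> (n - j = (n - j.+1).+1)%N by lia.
split=> [|j lt_jn|j lt_jn||j lt_jn] /=; rewrite ?subn0 ?subnn ?(traj_pn tr) ?(traj_u0 tr) //.
- by rewrite (pred_n j lt_jn) (traj_uS tr) ?invrK //; lia.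
- have lt_n1 : (n - j.+1 < n)%N by lia.
  have := traj_p_gt0 tr lt_n1.
  by rewrite (pred_n j lt_jn) (traj_uS tr lt_n1) (traj_pS tr lt_n1) => ?; field; lra.
- by rewrite (pred_n j lt_jn) (traj_uS tr) ?invr_gt0 ?(traj_p_gt0 tr) //; lia.
Qed.

Lemma traj_u_rev j : (j <= n)%N -> u j = p (n - j)%N.
Proof. by move=> le_jn; rewrite -(traj_u_eq trajectory_rev le_jn). Qed.

End Symmetry.

Section Formula.
Variables (R : realType) (n : nat) (p u : nat -> R).
Hypothesis tr : trajectory n p u.
Local Notation x := (traj_argmin p u).
Local Notation K := n./2.

Lemma traj_telescope m : (m <= n)%N ->
  \sum_(0 <= k < m) (2 * u k - 3 * u k.+1 + p k) = p m * u m - 2 * u m.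
Proof.
elim: m => [|m IH] le_mn; first by rewrite big_geq // (traj_u0 tr); ring.
rewrite big_nat_recr //= IH 1?ltnW //; have := traj_p_gt0 tr le_mn.
by rewrite (traj_uS tr le_mn) (traj_pS tr le_mn) => ?; field; lra.
Qed.

Lemma traj_argmin_rev k : (k < n)%N -> x (n - k.+1)%N = x k.
Proof.
move=> lt_kn; rewrite -(traj_argmin_succ tr lt_kn) /traj_argmin.
rewrite (traj_u_rev tr (_ : k.+1 <= n)%N) // (traj_u_rev tr (leq_subr _ _)).
by rewrite subKn.
Qed.

Lemma traj_p_half_odd : odd n -> p K = 1.
Proof.
move=> odd_n; have lt_Kn : (K < n)%N by lia.
have := traj_u_rev tr lt_Kn; rewrite (traj_uS tr lt_Kn) (_ : n - K.+1 = K)%N; last by lia.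
have := traj_p_gt0 tr lt_Kn => pK_gt0 /(congr1 (fun z => z * p K)).
by rewrite mulVf ?gt_eqF //; nra.
Qed.

Lemma traj_middle_sum :
  \sum_(K <= k < n - K) (3 - x k - p k) = p K * u K - 2 * u K + 1 - (p K - 1) ^+ 2.
Proof.
have [odd_n | even_n] := boolP (odd n).
  have -> : (n - K = K.+1)%N by lia.
  by rewrite big_nat1 /traj_argmin traj_p_half_odd //; ring.
have le_Kn : (K <= n)%N by lia.
have nK : (n - K = K)%N by lia.
by rewrite nK big_geq // (traj_u_rev tr le_Kn) nK; ring.
Qed.

Lemma traj_Cn_formula :
  3 * n%:R - (\sum_(0 <= k < n) x k + \sum_(0 <= k < n) p k) =
  2 * (\sum_(0 <= j < K) (3 - p j + u j - 2 * u j.+1 - p j * u j)) + (1 - (p K - 1) ^+ 2).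
Proof.
have le_Kn : (K <= n)%N by lia.
have -> : 3 * n%:R - (\sum_(0 <= k < n) x k + \sum_(0 <= k < n) p k) =
    \sum_(0 <= k < n) (3 - x k - p k).
  by rewrite !sumrB sumr_const_nat subn0 -mulr_natr; ring.
rewrite (@big_cat_nat _ _ _ K) //= (@big_cat_nat _ _ _ (n - K) K n) /=; [|lia|lia].
have -> : \sum_(n - K <= k < n) (3 - x k - p k) = \sum_(0 <= k < K) (3 - x k - u k.+1).
  rewrite big_nat_rev_tail //; apply: eq_big_nat => k /andP[_ lt_kK].
  by rewrite traj_argmin_rev -?(traj_u_rev tr) //; lia.
have pair : \sum_(0 <= k < K) (3 - x k - p k) + \sum_(0 <= k < K) (3 - x k - u k.+1)
    = 2 * (\sum_(0 <= j < K) (3 - p j + u j - 2 * u j.+1 - p j * u j))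
      - \sum_(0 <= k < K) (2 * u k - 3 * u k.+1 + p k).
  by rewrite mulr_sumr -big_split -sumrB; apply: eq_bigr => k _ /=; rewrite /traj_argmin; ring.
by move: pair; rewrite traj_middle_sum traj_telescope //; lra.
Qed.

End Formula.

Lemma An_trajectory (R : realType) n (p u : nat -> R) :
  trajectory n p u -> An R n = fseq n (traj_argmin p u).
Proof.
move=> tr; apply: inf_eq_lbound.
  exists (fun i : 'I_n => traj_argmin p u i); first by move=> i; apply: (traj_argmin_gt0 tr).
  exact: fn_fseq.
move=> _ [x x_gt0 <-].
rewrite (@fn_fseq _ _ _ (fun l => oapp x 1 (insub l))) => [|i]; last by rewrite valK.
apply: (traj_argmin_min tr) => k lt_kn.
by rewrite -[k]/(val (Ordinal lt_kn)) valK; apply: x_gt0.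
Qed.

Lemma traj_summand_lambda (R : realFieldType) n (p u : nat -> R) j :
  trajectory n p u -> (j < n)%N ->
  3 - p j + u j - 2 * u j.+1 - p j * u j
  = (1 - u j.+1) * ((1 - u j) - 2 * (1 - u j.+1)) / u j.+1.
Proof.
move=> tr lt_jn; have := traj_p_gt0 tr lt_jn.
by rewrite (traj_uS tr lt_jn) => ?; field; lra.
Qed.

Theorem lemma12 (R : realType) (n : nat) (T : nat -> R * R) :
  (1 <= n)%N -> is_trajectory n T ->
  let p := fun j => (T j).1 in
  let u := fun j => (T j).2 in
  let lam := fun j => 1 - u j in
  let k := n./2 in
  let delta := 1 - (p k - 1) ^+ 2 in
  Cn R n = 2 * (\sum_(0 <= j < k) (3 - p j + u j - 2 * u j.+1 - p j * u j)) + delta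
  /\ 2 * (\sum_(0 <= j < k) (3 - p j + u j - 2 * u j.+1 - p j * u j)) + delta
     = 2 * (\sum_(1 <= j < k.+1) (lam j * (lam j.-1 - 2 * lam j) / u j)) + delta.
Proof.
move=> _ /is_trajectory_coords tr p u lam k delta; split.
  by rewrite /Cn (An_trajectory tr) (fseq_traj_argmin tr) (traj_Cn_formula tr).
congr (2 * _ + _); rewrite big_add1 /=; apply: eq_big_nat => j /andP[_ lt_jk].
by apply: (traj_summand_lambda tr); rewrite /k in lt_jk; lia.
Qed.
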